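(* Let $n\ge1$, $d\ge2$ and fix $p$ with $1\le p\le d-1$. Let $\phi_v:\mathbf H_d\to\mathbf H_{d+1}$ be the $\mathbb Q(v)$-algebra homomorphism with $\phi_v(T_i)=T_i$ for $1\le i<p$, $\phi_v(T_p)=T_pT_{p+1}T_p^{-1}$, and $\phi_v(T_i)=T_{i+1}$ for $p<i\le d-1$. Let $\phi^{\mathbf T}_1:\mathbf T_{n,d}\to\mathbf T_{n+1,d+1}$ be the $\mathbb Q(v)$-linear map \[ [r_1,\dots,r_d]\mapsto[r_1,\dots,r_p,\,n+1,\,r_{p+1},\dots,r_d]\qquad(1\le r_k\le n). \] Then for all $x\in\mathbf T_{n,d}$ and $h\in\mathbf H_d$, $\phi^{\mathbf T}_1(x\cdot h)=\phi^{\mathbf T}_1(x)\cdot\phi_v(h)$.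
   Context: $\mathbf H_d$ is the $\mathbb Q(v)$-algebra generated by $T_1,\dots,T_{d-1}$ with relations $(T_i-v)(T_i+v^{-1})=0$, $T_iT_{i+1}T_i=T_{i+1}T_iT_{i+1}$, and $T_iT_j=T_jT_i$ for $|i-j|\ge2$ (the Hecke algebra of type $A_{d-1}$ with equal parameters, tensored up to $\mathbb Q(v)$). $\mathbf V_n$ is the $\mathbb Q(v)$-vector space with basis $e_1,\dots,e_n$, $\mathbf T_{n,d}=\mathbf V_n^{\otimes d}$, and $[r_1,\dots,r_d]:=e_{r_1}\otimes\cdots\otimes e_{r_d}$. $\mathbf T_{n,d}$ is a right $\mathbf H_d$-module via, for $1\le i\le d-1$: $[\dots,r_i,r_{i+1},\dots]\cdot T_i=[\dots,r_{i+1},r_i,\dots]$ if $r_i<r_{i+1}$; $=v[\dots,r_i,r_{i+1},\dots]$ if $r_i=r_{i+1}$; $=(v-v^{-1})[\dots,r_i,r_{i+1},\dots]+[\dots,r_{i+1},r_i,\dots]$ if $r_i>r_{i+1}$ (only positions $i,i+1$ change). The map $\phi_v$ is the edge-contraction embedding of Hecke algebras for type $A_d$ along the edge $\{p,p+1\}$ (with $s_+=p$, $s_-=p+1$), and is a well-defined algebra homomorphism. *)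

From HB Require Import structures.
From mathcomp Require Import all_boot all_order all_algebra.
Set Implicit Arguments. Unset Strict Implicit. Unset Printing Implicit Defensive.
Import GRing.Theory.
Local Open Scope ring_scope.

Definition Qv : fieldType := {fraction {poly rat}}.
Definition v : Qv := FracField.tofrac ('X : {poly rat}).

(* Basis indices of T_{n,d} = V_n^{(x)d}: functions from positions 'I_d
   (0-based) to values 'I_n (value k : 'I_n stands for e_{k+1}). *)
Notation idx n d := {ffun 'I_d -> 'I_n}.

Notation tens n d := {ffun idx n d -> Qv^o}.

Definition bvec n d (r : idx n d) : tens n d := [ffun s => (s == r)%:R].

Definition ent n d (r : idx n d) (j : nat) : nat :=
  if insub j is Some k then val (r k) else 0%N.

(* 1-based generator index i swaps 0-based positions i-1 and i *)
Definition swapnat (i k : nat) : nat :=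
  if k == i.-1 then i else if k == i then i.-1 else k.

Definition swapidx n d (i : nat) (r : idx n d) : idx n d :=
  [ffun k : 'I_d => r (insubd k (swapnat i k))].

Definition actB n d (i : nat) (r : idx n d) : tens n d :=
  let a := ent r i.-1 in let b := ent r i in
  if (a < b)%N then bvec (swapidx i r)
  else if a == b then v *: bvec r
  else (v - v^-1) *: bvec r + bvec (swapidx i r).

Definition actT n d (i : nat) (x : tens n d) : tens n d :=
  \sum_(r : idx n d) x r *: actB i r.

(* Elements of H_d are written via the generators T_i (1 <= i <= d-1) and
   their inverses: a letter (i, false) is T_i, (i, true) is T_i^{-1}.
   A word is a product of letters; an element of H_d is a Q(v)-linear
   combination of words. *)
Definition letter := (nat * bool)%type.
Definition word := seq letter.
Definition hexpr := seq (Qv * word).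

Definition valid_word (d : nat) (w : word) : bool :=
  all (fun l : letter => (1 <= l.1 <= d.-1)%N) w.
Definition valid_hexpr (d : nat) (h : hexpr) : bool :=
  all (fun cw : Qv * word => valid_word d cw.2) h.

(* action of a letter; T_i^{-1} = T_i - (v - v^{-1}) in H_d *)
Definition actL n d (x : tens n d) (l : letter) : tens n d :=
  if l.2 then actT l.1 x - (v - v^-1) *: x else actT l.1 x.

Definition actW n d (x : tens n d) (w : word) : tens n d := foldl (@actL n d) x w.
Definition actH n d (x : tens n d) (h : hexpr) : tens n d :=
  \sum_(cw <- h) cw.1 *: actW x cw.2.

Definition phiL (p : nat) (l : letter) : word :=
  let: (i, b) := l in
  if (i < p)%N then [:: (i, b)]
  else if i == p then
    (if b then [:: (p, false); (p.+1, true); (p, true)]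
          else [:: (p, false); (p.+1, false); (p, true)])
  else [:: (i.+1, b)].
Definition phiW (p : nat) (w : word) : word := flatten (map (phiL p) w).
Definition phiH (p : nat) (h : hexpr) : hexpr :=
  map (fun cw : Qv * word => (cw.1, phiW p cw.2)) h.

Definition insidx n d (p : nat) (r : idx n d) : idx n.+1 d.+1 :=
  [ffun k : 'I_d.+1 =>
     if (k : nat) == p then ord_max
     else if insub (if (k < p)%N then (k : nat) else k.-1) is Some j
          then widen_ord (leqnSn n) (r j) else ord_max].

Definition phiT n d (p : nat) (x : tens n d) : tens n.+1 d.+1 :=
  \sum_(r : idx n d) x r *: bvec (insidx p r).

From HB Require Import structures.
From mathcomp Require Import all_boot all_order all_algebra zify.
Set Implicit Arguments. Unset Strict Implicit. Unset Printing Implicit Defensive.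
Import GRing.Theory.
Local Open Scope ring_scope.

(* Both sides are linear in x and multiplicative in h, so it suffices to
   check a basis vector against a single generator T_i^{±1}.  Inserting n+1
   keeps the relative order of the other letters, so φ^T intertwines T_i with
   T_i for i < p and with T_{i+1} for i > p.  For T_p, let ψ insert n+1 at
   position p instead of p+1.  As n+1 exceeds every letter, T_p acts on the
   image of φ^T as the bare transposition, so φ^T(y) T_p = ψ(y), and ψ
   intertwines T_p with T_{p+1}.  Hence
   φ^T(x T_p) T_p = ψ(x T_p) = ψ(x) T_{p+1} = φ^T(x) T_p T_{p+1},
   and the quadratic relation T_p^{-1} T_p = 1 gives
   φ^T(x T_p) = φ^T(x) T_p T_{p+1} T_p^{-1}. *)

Section BasisExpansion.
Variables n d : nat.
Implicit Types (x : tens n d) (r s : idx n d).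

Lemma sum_bvec x : \sum_r x r *: bvec r = x.
Proof.
apply/ffunP => s; rewrite sum_ffunE (bigD1 s) //= big1 ?addr0.
  by rewrite !ffunE eqxx; exact: mulr1.
by move=> r /negbTE rs; rewrite !ffunE eq_sym rs; exact: mulr0.
Qed.

Lemma sum_bvec_is_linear m e (F : idx n d -> tens m e) :
  linear (fun x => \sum_r x r *: F r).
Proof.
move=> a x y; rewrite scaler_sumr -big_split; apply: eq_bigr => r _.
by rewrite !ffunE scalerDl scalerA.
Qed.

Lemma sum_bvec_coord m e (F : idx n d -> tens m e) s :
  \sum_r bvec s r *: F r = F s.
Proof.
rewrite (bigD1 s) //= big1 ?addr0; first by rewrite ffunE eqxx scale1r.
by move=> r /negbTE rs; rewrite ffunE rs scale0r.
Qed.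

Lemma linear_bvec_ext (V : lmodType Qv) (f g : {linear tens n d -> V}) :
  (forall r, f (bvec r) = g (bvec r)) -> f =1 g.
Proof.
move=> fg x; rewrite -(sum_bvec x) !linear_sum.
by apply: eq_bigr => r _; rewrite !linearZ fg.
Qed.

End BasisExpansion.

Lemma actT_is_linear n d i : linear (@actT n d i).
Proof. exact: sum_bvec_is_linear. Qed.
HB.instance Definition _ n d i :=
  GRing.isLinear.Build Qv (tens n d) (tens n d) *:%R (@actT n d i)
    (actT_is_linear i).

Lemma phiT_is_linear n d p : linear (@phiT n d p).
Proof. exact: sum_bvec_is_linear. Qed.
HB.instance Definition _ n d p :=
  GRing.isLinear.Build Qv (tens n d) (tens n.+1 d.+1) *:%R (@phiT n d p)
    (phiT_is_linear p).

Lemma actT_bvec n d i (r : idx n d) : actT i (bvec r) = actB i r.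
Proof. exact: sum_bvec_coord. Qed.

Lemma phiT_bvec n d p (r : idx n d) : phiT p (bvec r) = bvec (insidx p r).
Proof. exact: sum_bvec_coord. Qed.

Definition actTinv n d i : tens n d -> tens n d :=
  @actT n d i \- (v - v^-1) \*: idfun.
HB.instance Definition _ n d i := GRing.Linear.on (@actTinv n d i).

Lemma actL_false n d (x : tens n d) i : actL x (i, false) = actT i x.
Proof. by []. Qed.

Lemma actL_true n d (x : tens n d) i : actL x (i, true) = actTinv i x.
Proof. by []. Qed.

Section Entries.
Variables n d : nat.
Implicit Types (r s : idx n d).

Lemma ent_out r j : (d <= j)%N -> ent r j = 0%N.
Proof. by move=> dj; rewrite /ent insubN // -leqNgt. Qed.

Lemma entE r j (jd : (j < d)%N) : ent r j = r (Ordinal jd).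
Proof. by rewrite /ent insubT. Qed.

Lemma ent_ltn r j : (j < d)%N -> (ent r j < n)%N.
Proof. by move=> jd; rewrite (entE _ jd) ltn_ord. Qed.

Lemma idx_ent_inj r s : (forall j, (j < d)%N -> ent r j = ent s j) -> r = s.
Proof.
move=> rs; apply/ffunP => k; apply: val_inj => /=.
have -> : k = Ordinal (ltn_ord k) by exact: val_inj.
by rewrite -!entE rs.
Qed.

Lemma ent_swapidx i r j : (i < d)%N -> ent (swapidx i r) j = ent r (swapnat i j).
Proof.
move=> id; have swap_lt k : (k < d)%N = (swapnat i k < d)%N.
  by rewrite /swapnat; case: ifP => /eqP; [|case: ifP => /eqP]; lia.
case: (ltnP j d) => jd; last first.
  by rewrite !ent_out // leqNgt -swap_lt -leqNgt.
have sjd : (swapnat i j < d)%N by rewrite -swap_lt.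
rewrite (entE _ jd) (entE _ sjd) ffunE /insubd insubT.
by congr (val (r _)); apply: val_inj.
Qed.

End Entries.

Lemma ent_insidx n d p (r : idx n d) j : (p <= d)%N ->
  ent (insidx p r) j = if j == p then n else ent r (if (j < p)%N then j else j.-1).
Proof.
move=> pd; case: (ltnP j d.+1) => jd; last first.
  rewrite [LHS]ent_out //; case: (j =P p) => jp; first lia.
  by rewrite ent_out //; case: ifP; lia.
rewrite (entE _ jd) ffunE /=; case: (j =P p) => // jp.
by rewrite /ent; case: insubP => //=; case: ifP; lia.
Qed.

Lemma actB_map n d m e (f : {linear tens n d -> tens m e}) i j
    (r : idx n d) (s : idx m e) :
  ent s j.-1 = ent r i.-1 -> ent s j = ent r i ->
  f (bvec r) = bvec s -> f (bvec (swapidx i r)) = bvec (swapidx j s) ->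
  f (actB i r) = actB j s.
Proof.
move=> E1 E2 fr fsw; rewrite /actB /= E1 E2.
by case: ifP => _; [|case: ifP => _]; rewrite ?linearD ?linearZ /= ?fr ?fsw.
Qed.

Section BasisAction.
Variables n d : nat.
Implicit Types (r : idx n d).

Lemma actB_lt i r : (ent r i.-1 < ent r i)%N -> actB i r = bvec (swapidx i r).
Proof. by rewrite /actB /= => ->. Qed.

Lemma actB_eq i r : ent r i.-1 = ent r i -> actB i r = v *: bvec r.
Proof. by rewrite /actB /= => ->; rewrite ltnn eqxx. Qed.

Lemma actB_gt i r : (ent r i < ent r i.-1)%N ->
  actB i r = (v - v^-1) *: bvec r + bvec (swapidx i r).
Proof. by rewrite /actB /= => lt; rewrite ltnNge (ltnW lt) gtn_eqF. Qed.

End BasisAction.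

Ltac ent_arith :=
  rewrite /swapnat;
  repeat match goal with |- context [if ?b then _ else _] =>
    lazymatch b with context [if _ then _ else _] => fail | _ =>
      let E := fresh "E" in case E : b; cbv iota end end;
  try (congr ent; lia); try lia.

Section QuadraticRelation.
Variables n d i : nat.
Hypothesis i_range : (0 < i < d)%N.
Implicit Types (r : idx n d).

Lemma swapidxK r : swapidx i (swapidx i r) = r.
Proof. by apply: idx_ent_inj => j _; rewrite !ent_swapidx; [ent_arith|lia..]. Qed.

Lemma ent_swapidx_pred r : ent (swapidx i r) i.-1 = ent r i.
Proof. by rewrite ent_swapidx; [ent_arith|lia]. Qed.

Lemma ent_swapidx_self r : ent (swapidx i r) i = ent r i.-1.
Proof. by rewrite ent_swapidx; [ent_arith|lia]. Qed.

Lemma actTinv_actT (y : tens n d) : actTinv i (actT i y) = y.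
Proof.
apply: (linear_bvec_ext (f := actTinv i \o actT i) (g := idfun)) => r /=.
rewrite actT_bvec /actTinv /=.
have [lt|gt|eq] := ltngtP (ent r i.-1) (ent r i).
- rewrite actB_lt // actT_bvec actB_gt ?ent_swapidx_pred ?ent_swapidx_self //.
  by rewrite swapidxK addrAC subrr add0r.
- rewrite actB_gt // linearD linearZ /= !actT_bvec actB_gt //.
  rewrite actB_lt ?ent_swapidx_pred ?ent_swapidx_self // swapidxK.
  by rewrite addrAC subrr add0r.
- rewrite actB_eq // linearZ /= actT_bvec actB_eq // !scalerA -scalerBl.
  by rewrite mulrBl opprB addrCA subrr addr0 mulVf ?scale1r // tofrac_eq0 polyX_eq0.
Qed.

End QuadraticRelation.

Section Insertion.
Variables n d p : nat.
Hypothesis p_range : (0 < p < d)%N.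
Implicit Types (r : idx n d) (x : tens n d).

Let p_le_d : (p <= d)%N. Proof. lia. Qed.

Lemma swapidx_insidx_lt i r : (0 < i < p)%N ->
  swapidx i (insidx p r) = insidx p (swapidx i r).
Proof.
move=> ip; apply: idx_ent_inj => j _.
by rewrite ent_swapidx ?ent_insidx // ?ent_swapidx; [ent_arith|lia..].
Qed.

Lemma swapidx_insidx_gt i r : (p < i < d)%N ->
  swapidx i.+1 (insidx p r) = insidx p (swapidx i r).
Proof.
move=> ip; apply: idx_ent_inj => j _.
by rewrite ent_swapidx ?ent_insidx // ?ent_swapidx; [ent_arith|lia..].
Qed.

Lemma swapidx_insidx_braid r :
  swapidx p (insidx p (swapidx p r)) = swapidx p.+1 (swapidx p (insidx p r)).
Proof.
apply: idx_ent_inj => j _.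
by rewrite !ent_swapidx ?ent_insidx // ?ent_swapidx; [ent_arith|lia..].
Qed.

Lemma actT_phiT_bvec_p r :
  actT p (phiT p (bvec r)) = bvec (swapidx p (insidx p r)).
Proof.
rewrite phiT_bvec actT_bvec; apply: actB_lt.
rewrite !ent_insidx // eqxx ifF ?ifT; try lia.
by apply: ent_ltn; lia.
Qed.

Lemma phiT_actT_lt i x : (0 < i < p)%N -> phiT p (actT i x) = actT i (phiT p x).
Proof.
move=> ip; apply: (linear_bvec_ext (f := phiT p \o actT i) (g := actT i \o phiT p)) => r /=.
rewrite !(actT_bvec, phiT_bvec); apply: actB_map.
- by rewrite ent_insidx //; ent_arith.
- by rewrite ent_insidx //; ent_arith.
- exact: phiT_bvec.
- by apply: (etrans (phiT_bvec _ _)); rewrite swapidx_insidx_lt.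
Qed.

Lemma phiT_actT_gt i x : (p < i < d)%N -> phiT p (actT i x) = actT i.+1 (phiT p x).
Proof.
move=> ip; apply: (linear_bvec_ext (f := phiT p \o actT i) (g := actT i.+1 \o phiT p)) => r /=.
rewrite !(actT_bvec, phiT_bvec); apply: actB_map.
- by rewrite ent_insidx //; ent_arith.
- by rewrite ent_insidx //; ent_arith.
- exact: phiT_bvec.
- by apply: (etrans (phiT_bvec _ _)); rewrite swapidx_insidx_gt.
Qed.

Lemma phiT_actT_p x :
  actT p (phiT p (actT p x)) = actT p.+1 (actT p (phiT p x)).
Proof.
apply: (linear_bvec_ext (f := actT p \o phiT p \o actT p)
                        (g := actT p.+1 \o actT p \o phiT p)) => r /=.
rewrite actT_phiT_bvec_p !actT_bvec.
apply: (actB_map (f := actT p \o phiT p)).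
- by rewrite ent_swapidx ?ent_insidx //; ent_arith.
- by rewrite ent_swapidx ?ent_insidx //; ent_arith.
- exact: actT_phiT_bvec_p.
- by apply: etrans (actT_phiT_bvec_p _) _; rewrite swapidx_insidx_braid.
Qed.

Lemma phiT_actTinv i j :
  (forall x, phiT p (actT i x) = actT j (phiT p x)) ->
  forall x, phiT p (actTinv i x) = actTinv j (phiT p x).
Proof. by move=> comm x; rewrite /actTinv /= linearB linearZ /= comm. Qed.

Lemma phiT_actL x l : (1 <= l.1 <= d.-1)%N ->
  phiT p (actL x l) = actW (phiT p x) (phiL p l).
Proof.
case: l => i b /= i_range; rewrite /phiL /actW /=.
have p_range' : (0 < p < d.+1)%N by lia.
case: ltngtP => [ip|ip|->]; case: b; rewrite /= ?actL_true ?actL_false.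
- by apply: phiT_actTinv => y; apply: phiT_actT_lt; lia.
- by apply: phiT_actT_lt; lia.
- by apply: phiT_actTinv => y; apply: phiT_actT_gt; lia.
- by apply: phiT_actT_gt; lia.
- set y := actT p (phiT p x).
  have -> : actTinv p.+1 y = actT p.+1 y - (v - v^-1) *: y by [].
  rewrite [RHS]linearB linearZ /= -phiT_actT_p !actTinv_actT //.
  by rewrite [LHS]linearB linearZ.
- by rewrite -phiT_actT_p actTinv_actT.
Qed.

Lemma phiT_actW x w : valid_word d w ->
  phiT p (actW x w) = actW (phiT p x) (phiW p w).
Proof.
elim: w x => [|l w IHw] x //= /andP[l_range w_valid].
by rewrite IHw // phiT_actL // /actW /phiW /= foldl_cat.
Qed.

End Insertion.

Theorem mainTheorem10 (n d p : nat) :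
  (1 <= n)%N -> (2 <= d)%N -> (1 <= p <= d.-1)%N ->
  forall (x : tens n d) (h : hexpr), valid_hexpr d h ->
    phiT p (actH x h) = actH (phiT p x) (phiH p h).
Proof.
move=> _ _ p_range x h h_valid; have p_range' : (0 < p < d)%N by lia.
rewrite /actH /phiH big_map linear_sum; apply: eq_big_seq => cw cw_in /=.
by rewrite linearZ /= phiT_actW //; apply: (allP h_valid).
Qed.
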